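(* Let the words $C_n$, $D_n$ over $\{1,2\}$ be defined by $C_1=1$, $D_1=2$, $C_{k+1}=C_k\,1\,D_k$, $D_{k+1}=C_k\,2\,D_k$ for $k\ge 1$. For a word $w=w_1\cdots w_m$, let $N_{12}(w)$ be the number of pairs $i<j$ with $w_i=1$, $w_j=2$, and $N_{21}(w)$ the number of pairs $i<j$ with $w_i=2$, $w_j=1$. Then for all $n\geq 2$, $$N_{12}(C_n)=N_{12}(D_n)=2\cdot 4^{n-2}+(n-2)\cdot 2^{n-2},\qquad N_{21}(C_n)=N_{21}(D_n)=2\cdot 4^{n-2}-n\cdot 2^{n-2}.$$
   Context: $N_{12}(w)$ and $N_{21}(w)$ are the numbers of occurrences in $w$ of the classical patterns $1\text{-}2$ and $2\text{-}1$ respectively. *)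

From mathcomp Require Import all_boot.
Set Implicit Arguments. Unset Strict Implicit. Unset Printing Implicit Defensive.

(* CD k = (C_(k+1), D_(k+1)), so C_1 = [:: 1], D_1 = [:: 2],
   C_(k+1) = C_k 1 D_k, D_(k+1) = C_k 2 D_k. *)
Fixpoint CD (k : nat) : seq nat * seq nat :=
  match k with
  | 0 => ([:: 1], [:: 2])
  | k'.+1 => let (c, d) := CD k' in (c ++ 1 :: d, c ++ 2 :: d)
  end.

(* C n and D n for n >= 1 (index n, so C 1 = [:: 1]); C 0 := C 1 is junk. *)
Definition C (n : nat) : seq nat := (CD n.-1).1.
Definition D (n : nat) : seq nat := (CD n.-1).2.

Definition Npat (a b : nat) (w : seq nat) : nat :=
  \sum_(j < size w) \sum_(i < j) ((nth 0 w i == a) && (nth 0 w j == b)).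

Definition N12 := Npat 1 2.
Definition N21 := Npat 2 1.

From mathcomp Require Import all_boot.
From mathcomp Require Import zify.

(* Pattern counts are additive over concatenation up to the cross term
   [count a s * count b t].  Since [C_n] has [2^(n-1)] ones and one two less,
   and symmetrically for [D_n], splitting [C_(n+1) = C_n 1 D_n] and
   [D_(n+1) = C_n 2 D_n] shows that [N12] and [N21] of both words obey
   [f(n+1) = 2 f(n) + 4^(n-1) +- 2^(n-1)], whose solutions are the closed forms. *)

Lemma count_mem_nth {T : eqType} (x0 a : T) (s : seq T) :
  count_mem a s = \sum_(i < size s) (nth x0 s i == a).
Proof.
rewrite -sum1_count (big_nth x0) big_mkord big_mkcond.
by apply: eq_bigr => i _; rewrite /=; case: (_ == _).
Qed.

Lemma Npat_rcons (a b : nat) (s : seq nat) (x : nat) :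
  Npat a b (rcons s x) = Npat a b s + (x == b) * count_mem a s.
Proof.
rewrite /Npat size_rcons big_ord_recr /=; congr (_ + _).
  apply: eq_bigr => j _; apply: eq_bigr => i _.
  by rewrite !nth_rcons (ltn_ord j) (ltn_trans (ltn_ord i) (ltn_ord j)).
rewrite nth_rcons ltnn eqxx (count_mem_nth 0%N) big_distrr /=.
apply: eq_bigr => i _; rewrite nth_rcons (ltn_ord i).
by case: (nth 0 s i == a); case: (x == b).
Qed.

Lemma Npat_cat (a b : nat) (s t : seq nat) :
  Npat a b (s ++ t) = Npat a b s + Npat a b t + count_mem a s * count_mem b t.
Proof.
elim/last_ind: t => [|t x IHt]; first by rewrite cats0 /Npat big_ord0 muln0 !addn0.
rewrite -rcons_cat !Npat_rcons IHt -cats1 !count_cat /=; lia.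
Qed.

Lemma Npat_cat_cons (a b : nat) (s : seq nat) (x : nat) (t : seq nat) :
  Npat a b (s ++ x :: t) =
  Npat a b s + Npat a b t + count_mem a s * count_mem b (x :: t)
    + (x == a) * count_mem b t.
Proof.
rewrite Npat_cat -cat1s Npat_cat /= addn0.
have -> : Npat a b [:: x] = 0 by rewrite /Npat big_ord_recl !big_ord0.
lia.
Qed.

Lemma C_succ (m : nat) : C m.+2 = C m.+1 ++ 1 :: D m.+1.
Proof. by rewrite /C /D /=; case: (CD m). Qed.

Lemma D_succ (m : nat) : D m.+2 = C m.+1 ++ 2 :: D m.+1.
Proof. by rewrite /C /D /=; case: (CD m). Qed.

Lemma count_C_D (m : nat) :
  [/\ count_mem 1 (C m.+1) = 2 ^ m, (count_mem 2 (C m.+1)).+1 = 2 ^ m,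
      (count_mem 1 (D m.+1)).+1 = 2 ^ m & count_mem 2 (D m.+1) = 2 ^ m].
Proof.
elim: m => [|m IHm]; first by [].
(* the hypotheses go through [/=] with the goal so that [count_mem] keeps one form *)
case: IHm; rewrite C_succ D_succ !count_cat expnS /= => c1 c2 d1 d2.
split; lia.
Qed.

Lemma N12_C_D (m : nat) :
  N12 (C m.+2) = 2 * 4 ^ m + m * 2 ^ m /\ N12 (D m.+2) = 2 * 4 ^ m + m * 2 ^ m.
Proof.
rewrite -[4]/(2 * 2) expnMn /N12.
elim: m => [|m [IHc IHd]]; first by rewrite /Npat /= !big_ord_recr !big_ord0.
rewrite (C_succ m.+1) (D_succ m.+1) !Npat_cat_cons IHc IHd.
case: (count_C_D m.+1); rewrite !expnS /= => c1 c2 d1 d2; split; nia.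
Qed.

Lemma N21_C_D (m : nat) :
  N21 (C m.+2) + m.+2 * 2 ^ m = 2 * 4 ^ m /\
  N21 (D m.+2) + m.+2 * 2 ^ m = 2 * 4 ^ m.
Proof.
rewrite -[4]/(2 * 2) expnMn /N21.
elim: m => [|m [IHc IHd]]; first by rewrite /Npat /= !big_ord_recr !big_ord0.
rewrite (C_succ m.+1) (D_succ m.+1) !Npat_cat_cons; move: IHc IHd.
case: (count_C_D m.+1); rewrite !expnS /= => c1 c2 d1 d2 IHc IHd; split; nia.
Qed.

Theorem proposition3 (n : nat) : 2 <= n ->
  N12 (C n) = 2 * 4 ^ (n - 2) + (n - 2) * 2 ^ (n - 2) /\
  N12 (D n) = 2 * 4 ^ (n - 2) + (n - 2) * 2 ^ (n - 2) /\
  N21 (C n) = 2 * 4 ^ (n - 2) - n * 2 ^ (n - 2) /\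
  N21 (D n) = 2 * 4 ^ (n - 2) - n * 2 ^ (n - 2).
Proof.
case: n => [|[|m]] // _; rewrite subn2 /=.
have [N12C N12D] := N12_C_D m.
have [N21C N21D] := N21_C_D m.
lia.
Qed.
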